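(* Let $(S,K,I)$ be a split graph such that $K=\bigcup_{v\in I}N_v$. Let $P=v_1\ldots v_n$, with $n\geq 2$, be an induced path in $\Phi(S)$ with $d_1=\max\{d_i: i\in[n]\}$. Then: (1) $\left|\bigcup_{i=1}^n N_i\right|-d_1$ divides $\sigma_{12}$; (2) if $\Phi(S)=P$, then $|K|-d_1$ divides $\sigma_{12}$.
   Context: A split graph $(S,K,I)$ is a graph $S$ together with a fixed partition $V(S)=K\dot\cup I$, where $K$ is a clique and $I$ is an independent set. For a vertex $v_i$ (or $v$) of $S$, $N_i$ (or $N_v$) denotes its open neighborhood in $S$ and $d_i=|N_i|$ its degree in $S$; for $u,v$ write $\eta_{uv}=|N_u\cap N_v|$. The factor graph $\Phi(S)$ is the loopless multigraph with vertex set $I$ in which, for distinct $u,v\in I$, there is one edge joining $u$ and $v$ for each 2-switch of $S$ acting on $u$ and $v$ (a 2-switch replaces edges $ab,cd$ with $ac,bd$ when $ab,cd\in E(S)$ and $ac,bd\notin E(S)$); equivalently, the multiplicity of the edge $uv$ is $\sigma_{uv}=(d_u-\eta_{uv})(d_v-\eta_{uv})$, and $u,v$ are adjacent iff $\sigma_{uv}>0$. $\sigma_{12}$ denotes $\sigma_{v_1v_2}$. An induced path in $\Phi(S)$ consists of distinct vertices with consecutive ones adjacent and no other pair adjacent (multiplicities ignored for adjacency). *)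

From mathcomp Require Import all_boot.
Set Implicit Arguments. Unset Strict Implicit. Unset Printing Implicit Defensive.

Definition simple_graph (T : finType) (e : rel T) : Prop :=
  symmetric e /\ irreflexive e.

Definition split_graph (T : finType) (e : rel T) (K I : {set T}) : Prop :=
  [/\ simple_graph e,
      K :|: I = [set: T],
      K :&: I = set0,
      {in K &, forall u v, u != v -> e u v} &
      {in I &, forall u v, ~~ e u v}].

Section Nbhd.
Variables (T : finType) (e : rel T).

Definition N (v : T) : {set T} := [set u | e v u].
Definition deg (v : T) : nat := #|N v|.
Definition eta (u v : T) : nat := #|N u :&: N v|.

(* multiplicity of the edge uv in the factor graph Phi(S) *)
Definition sigma (u v : T) : nat := (deg u - eta u v) * (deg v - eta u v).

(* adjacency in Phi(S) (vertex set I, loopless; multiplicities ignored) *)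
Definition phi_adj (u v : T) : bool := (u != v) && (0 < sigma u v).

(* v_1 ... v_n (given as v 0, ..., v (n-1)) is an induced path in Phi(S),
   whose vertex set is I: distinct vertices of I, consecutive ones adjacent,
   no other pair adjacent. *)
Definition induced_path_phi (I : {set T}) (n : nat) (v : nat -> T) : Prop :=
  [/\ forall i, i < n -> v i \in I,
      forall i j, i < n -> j < n -> v i = v j -> i = j &
      forall i j, i < n -> j < n -> i != j ->
        phi_adj (v i) (v j) = ((i == j.+1) || (j == i.+1))].
End Nbhd.

(* For i >= 2 the vertices v_1 and v_(i+1) of the path are not adjacent in
   Phi(S), so sigma vanishes and one neighbourhood contains the other; as d_1
   is maximal, N_(i+1) is contained in N_1.  Hence the union of all N_i is
   N_1 ∪ N_2, and |N_1 ∪ N_2| - d_1 = d_2 - eta_12 is a factor of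
   sigma_12 = (d_1 - eta_12)(d_2 - eta_12).  When Phi(S) = P, the hypothesis
   on K says that K is exactly this union. *)
From mathcomp Require Import all_boot.
From mathcomp Require Import zify.

Set Implicit Arguments.
Unset Strict Implicit.
Unset Printing Implicit Defensive.

Lemma leq_card_setI (T : finType) (A B : {set T}) :
  (#|A| <= #|A :&: B|) = (A \subset B).
Proof.
apply/idP/idP => [leAI | /setIidPl -> //].
by apply/setIidPl/eqP; rewrite eqEcard subsetIl.
Qed.

Lemma bigcup_range (I J T : finType) (h : I -> J) (F : J -> {set T}) :
  \bigcup_(j in [set j | [exists i, h i == j]]) F j = \bigcup_i F (h i).
Proof.
have -> : [set j | [exists i, h i == j]] = h @: setT.
  apply/setP => j; rewrite inE.
  by apply/existsP/imsetP => [[i /eqP <-] | [i _ ->]]; exists i.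
by rewrite big_imset_idem //; [apply: eq_bigl => i; rewrite inE | apply: setUid].
Qed.

Section Neighbourhoods.
Variables (T : finType) (e : rel T).

Lemma sigma_eq0_subset (u w : T) :
  sigma e u w = 0 -> deg e w <= deg e u -> N e w \subset N e u.
Proof.
rewrite /sigma /deg /eta => /eqP; rewrite muln_eq0 !subn_eq0 leq_card_setI.
case/orP => [sub_uw le_wu | ]; last by rewrite setIC leq_card_setI.
suff -> : N e w = N e u by [].
by apply/eqP; rewrite eq_sym eqEcard sub_uw.
Qed.

Lemma card_setU_sub_deg_dvdn_sigma (u w : T) :
  #|N e u :|: N e w| - deg e u %| sigma e u w.
Proof.
have leIw : #|N e u :&: N e w| <= #|N e w| by rewrite subset_leq_card ?subsetIr.
have -> : #|N e u :|: N e w| - deg e u = deg e w - eta e u w.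
  by rewrite cardsU /deg /eta; lia.
exact: dvdn_mull.
Qed.

Variables (I : {set T}) (n : nat) (v : nat -> T).
Hypothesis path_v : induced_path_phi e I n v.
Hypothesis deg_max : forall i, i < n -> deg e (v i) <= deg e (v 0).

Lemma induced_path_N_subset i : 2 <= i < n -> N e (v i) \subset N e (v 0).
Proof.
case/andP=> le2i ltin; have [_ inj_v adj_v] := path_v.
have [lt0n ne0i] : 0 < n /\ 0 != i by lia.
have := adj_v 0 i lt0n ltin ne0i; rewrite /phi_adj.
have -> : v 0 != v i by apply/eqP => /(inj_v _ _ lt0n ltin); lia.
have -> : (0 == i.+1) || (i == 1) = false by lia.
by move/negbT; rewrite -eqn0Ngt => /eqP /sigma_eq0_subset; apply; apply: deg_max.
Qed.

Lemma bigcup_induced_path :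
  2 <= n -> \bigcup_(i < n) N e (v i) = N e (v 0) :|: N e (v 1).
Proof.
move=> le2n; apply/eqP; rewrite eqEsubset subUset; apply/and3P; split.
- apply/bigcupsP => [[[|[|i]] ltin]] _ /=; rewrite ?subsetUl ?subsetUr //.
  exact/(subset_trans _ (subsetUl _ _))/induced_path_N_subset.
- by rewrite (bigcup_sup (Ordinal (ltnW le2n))).
- by rewrite (bigcup_sup (Ordinal le2n)).
Qed.

End Neighbourhoods.

Theorem corollary2p5 (T : finType) (e : rel T) (K I : {set T})
    (n : nat) (v : nat -> T) :
  split_graph e K I ->
  K = \bigcup_(x in I) N e x ->
  2 <= n ->
  induced_path_phi e I n v ->
  (forall i, i < n -> deg e (v i) <= deg e (v 0)) ->
  (#|\bigcup_(i < n) N e (v i)| - deg e (v 0) %| sigma e (v 0) (v 1))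
  /\ (I = [set x | [exists i : 'I_n, v i == x]] ->
      #|K| - deg e (v 0) %| sigma e (v 0) (v 1)).
Proof.
move=> _ defK le2n path_v deg_max.
have union_dvd : #|\bigcup_(i < n) N e (v i)| - deg e (v 0) %| sigma e (v 0) (v 1).
  by rewrite (bigcup_induced_path path_v deg_max le2n) card_setU_sub_deg_dvdn_sigma.
split=> // defI.
by rewrite defK defI (bigcup_range (fun i : 'I_n => v i)).
Qed.
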